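(* Let $\mathbf{L}$ be an intermediate propositional logic and let $\mathbf{QL}$ be an intermediate predicate logic. For all formulas $A(x)$ and $B$ with $x$ not free in $B$: (1) the $\varepsilon\tau$-translations $(\mathit{CD})^{\varepsilon\tau}$, $(Q_\exists)^{\varepsilon\tau}$ and $(Q_\forall)^{\varepsilon\tau}$ are provable in the $\varepsilon\tau$-calculus $\varepsilon\tau(\mathbf{L})$; (2) the formulas $\mathit{CD}$, $Q_\exists$ and $Q_\forall$ themselves are provable in the extended calculus $\varepsilon\tau^+(\mathbf{QL})$, where $\mathit{CD}$: $\forall x(A(x)\lor B)\to(\forall x\,A(x)\lor B)$; $Q_\exists$: $(B\to\exists x\,A(x))\to\exists x(B\to A(x))$; $Q_\forall$: $(\forall x\,A(x)\to B)\to\exists x(A(x)\to B)$.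
   Context: An intermediate propositional logic is a set of propositional formulas containing intuitionistic propositional logic, contained in classical propositional logic, and closed under modus ponens and substitution. An intermediate predicate logic is a set of first-order formulas containing intuitionistic predicate logic, contained in classical predicate logic, closed under substitution, modus ponens and the quantifier rules ''from $B\to A(x)$ infer $B\to\forall y\,A(y)$'' and ''from $A(x)\to B$ infer $\exists y\,A(y)\to B$'' ($x$ not free in the conclusion). $\varepsilon\tau$-terms: for any formula $A(x)$ with $x$ free, $\varepsilon x\,A(x)$ and $\tau x\,A(x)$ are terms (terms are identified up to renaming of bound variables; substitution renames bound variables to avoid clashes). Critical formulas are all formulas $A(t)\to A(\varepsilon x\,A(x))$ and $A(\tau x\,A(x))\to A(t)$, $t$ any term. $\varepsilon\tau(\mathbf{L})$: the quantifier-free language with predicate symbols, function symbols and $\varepsilon\tau$-terms (formulas inside $\varepsilon\tau$-terms also quantifier-free); $\vdash_{\varepsilon\tau(\mathbf{L})}B$ means there is a finite sequence of formulas ending in $B$ each of which is a substitution instance of a formula of $\mathbf{L}$, a critical formula, or follows from earlier ones by modus ponens. $\varepsilon\tau^+(\mathbf{QL})$: the full first-order language with quantifiers extended by $\varepsilon\tau$-terms (built from arbitrary formulas) and critical formulas; provability means derivability in $\mathbf{QL}$ (its axioms, modus ponens, quantifier rules) from critical formulas. The $\varepsilon\tau$-translation $A^{\varepsilon\tau}$: identity on atomic formulas, commutes with $\land,\lor,\to,\lnot$, $(\exists x\,A(x))^{\varepsilon\tau}=A^{\varepsilon\tau}(\varepsilon x\,A^{\varepsilon\tau}(x))$, $(\forall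 x\,A(x))^{\varepsilon\tau}=A^{\varepsilon\tau}(\tau x\,A^{\varepsilon\tau}(x))$. *)

(* Syntax of first-order logic extended by epsilon/tau terms,
   with de Bruijn indices (terms identified up to renaming of bound variables). *)
From Stdlib Require Import List Arith.
Import ListNotations.

Inductive pform : Type :=
| PVar : nat -> pform
| PBot : pform
| PNeg : pform -> pform
| PAnd : pform -> pform -> pform
| POr  : pform -> pform -> pform
| PImp : pform -> pform -> pform.

Fixpoint psub (s : nat -> pform) (p : pform) : pform :=
  match p with
  | PVar n => s n
  | PBot => PBot
  | PNeg a => PNeg (psub s a)
  | PAnd a b => PAnd (psub s a) (psub s b)
  | POr a b => POr (psub s a) (psub s b)
  | PImp a b => PImp (psub s a) (psub s b)
  end.

Fixpoint peval (v : nat -> bool) (p : pform) : bool :=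
  match p with
  | PVar n => v n
  | PBot => false
  | PNeg a => negb (peval v a)
  | PAnd a b => peval v a && peval v b
  | POr a b => peval v a || peval v b
  | PImp a b => implb (peval v a) (peval v b)
  end.

Definition CPC (p : pform) : Prop := forall v, peval v p = true.

Inductive IPC : pform -> Prop :=
| ipc_k a b : IPC (PImp a (PImp b a))
| ipc_s a b c : IPC (PImp (PImp a (PImp b c)) (PImp (PImp a b) (PImp a c)))
| ipc_and1 a b : IPC (PImp (PAnd a b) a)
| ipc_and2 a b : IPC (PImp (PAnd a b) b)
| ipc_andI a b : IPC (PImp a (PImp b (PAnd a b)))
| ipc_or1 a b : IPC (PImp a (POr a b))
| ipc_or2 a b : IPC (PImp b (POr a b))
| ipc_orE a b c : IPC (PImp (PImp a c) (PImp (PImp b c) (PImp (POr a b) c)))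
| ipc_bot a : IPC (PImp PBot a)
| ipc_neg1 a : IPC (PImp (PImp a PBot) (PNeg a))
| ipc_neg2 a : IPC (PImp (PNeg a) (PImp a PBot))
| ipc_mp a b : IPC a -> IPC (PImp a b) -> IPC b.

Definition IntermediatePropLogic (L : pform -> Prop) : Prop :=
  (forall p, IPC p -> L p) /\
  (forall p, L p -> CPC p) /\
  (forall a b, L a -> L (PImp a b) -> L b) /\
  (forall s p, L p -> L (psub s p)).

(* Predicate and function symbols are named by nat; a symbol is the pair
   (name, arity), the arity being the length of the argument list. *)
Inductive term : Type :=
| Var : nat -> term
| Fn  : nat -> list term -> term
| Eps : form -> term      (* eps x A(x), x = de Bruijn index 0 of A *)
| Tau : form -> term
with form : Type :=
| Atom : nat -> list term -> form
| Bot  : form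
| Neg  : form -> form
| And  : form -> form -> form
| Or   : form -> form -> form
| Imp  : form -> form -> form
| All  : form -> form
| Ex   : form -> form.

Definition upren (xi : nat -> nat) : nat -> nat :=
  fun n => match n with 0 => 0 | S k => S (xi k) end.

Fixpoint tren (xi : nat -> nat) (t : term) : term :=
  match t with
  | Var n => Var (xi n)
  | Fn f ts => Fn f (map (tren xi) ts)
  | Eps A => Eps (fren (upren xi) A)
  | Tau A => Tau (fren (upren xi) A)
  end
with fren (xi : nat -> nat) (A : form) : form :=
  match A with
  | Atom p ts => Atom p (map (tren xi) ts)
  | Bot => Bot
  | Neg B => Neg (fren xi B)
  | And B C => And (fren xi B) (fren xi C)
  | Or B C => Or (fren xi B) (fren xi C)
  | Imp B C => Imp (fren xi B) (fren xi C)
  | All B => All (fren (upren xi) B)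
  | Ex B => Ex (fren (upren xi) B)
  end.

Definition tlift (t : term) : term := tren S t.
(* flift B: B placed under one more binder (the new variable is not free in it) *)
Definition flift (B : form) : form := fren S B.

Definition up (sg : nat -> term) : nat -> term :=
  fun n => match n with 0 => Var 0 | S k => tlift (sg k) end.

Fixpoint tsubst (sg : nat -> term) (t : term) : term :=
  match t with
  | Var n => sg n
  | Fn f ts => Fn f (map (tsubst sg) ts)
  | Eps A => Eps (fsubst (up sg) A)
  | Tau A => Tau (fsubst (up sg) A)
  end
with fsubst (sg : nat -> term) (A : form) : form :=
  match A with
  | Atom p ts => Atom p (map (tsubst sg) ts)
  | Bot => Bot
  | Neg B => Neg (fsubst sg B)
  | And B C => And (fsubst sg B) (fsubst sg C)
  | Or B C => Or (fsubst sg B) (fsubst sg C)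
  | Imp B C => Imp (fsubst sg B) (fsubst sg C)
  | All B => All (fsubst (up sg) B)
  | Ex B => Ex (fsubst (up sg) B)
  end.

Definition scons0 (t : term) : nat -> term :=
  fun n => match n with 0 => t | S k => Var k end.

(* inst0 t A = A(t), where A = A(x) with x the de Bruijn index 0 *)
Definition inst0 (t : term) (A : form) : form := fsubst (scons0 t) A.

(* Predicate substitution: sg p n is the formula substituted for the n-ary
   predicate symbol p; its free variables 0..n-1 stand for the arguments and
   its free variables n+k are parameters (free variable k of the whole
   formula).  d = number of binders passed. *)
Definition argsub (d : nat) (ts : list term) : nat -> term :=
  fun i => if i <? length ts then nth i ts (Var 0)
           else Var (i - length ts + d).

Fixpoint tpsub (sg : nat -> nat -> form) (d : nat) (t : term) : term :=
  match t with
  | Var n => Var n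
  | Fn f ts => Fn f (map (tpsub sg d) ts)
  | Eps A => Eps (fpsub sg (S d) A)
  | Tau A => Tau (fpsub sg (S d) A)
  end
with fpsub (sg : nat -> nat -> form) (d : nat) (A : form) : form :=
  match A with
  | Atom p ts => fsubst (argsub d (map (tpsub sg d) ts)) (sg p (length ts))
  | Bot => Bot
  | Neg B => Neg (fpsub sg d B)
  | And B C => And (fpsub sg d B) (fpsub sg d C)
  | Or B C => Or (fpsub sg d B) (fpsub sg d C)
  | Imp B C => Imp (fpsub sg d B) (fpsub sg d C)
  | All B => All (fpsub sg (S d) B)
  | Ex B => Ex (fpsub sg (S d) B)
  end.

Fixpoint tefree (t : term) : Prop :=
  match t with
  | Var _ => True
  | Fn _ ts => (fix go (l : list term) : Prop :=
                  match l with [] => True | u :: l' => tefree u /\ go l' end) ts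
  | Eps _ => False
  | Tau _ => False
  end.
Fixpoint fefree (A : form) : Prop :=
  match A with
  | Atom _ ts => (fix go (l : list term) : Prop :=
                  match l with [] => True | u :: l' => tefree u /\ go l' end) ts
  | Bot => True
  | Neg B => fefree B
  | And B C | Or B C | Imp B C => fefree B /\ fefree C
  | All B | Ex B => fefree B
  end.

Fixpoint tqf (t : term) : Prop :=
  match t with
  | Var _ => True
  | Fn _ ts => (fix go (l : list term) : Prop :=
                  match l with [] => True | u :: l' => tqf u /\ go l' end) ts
  | Eps A => fqf A
  | Tau A => fqf A
  end
with fqf (A : form) : Prop :=
  match A with
  | Atom _ ts => (fix go (l : list term) : Prop :=
                  match l with [] => True | u :: l' => tqf u /\ go l' end) ts
  | Bot => True
  | Neg B => fqf B
  | And B C | Or B C | Imp B C => fqf B /\ fqf C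
  | All _ | Ex _ => False
  end.

(* MP and the two quantifier rules; the condition "x not free in the
   conclusion" is expressed by the de Bruijn lifting of B. *)
Inductive HDer (Ax : form -> Prop) : form -> Prop :=
| hd_ax F : Ax F -> HDer Ax F
| hd_mp A B : HDer Ax A -> HDer Ax (Imp A B) -> HDer Ax B
| hd_all B A : HDer Ax (Imp (flift B) A) -> HDer Ax (Imp B (All A))
| hd_ex A B : HDer Ax (Imp A (flift B)) -> HDer Ax (Imp (Ex A) B).

Inductive IntAx : form -> Prop :=
| ax_k A B : IntAx (Imp A (Imp B A))
| ax_s A B C : IntAx (Imp (Imp A (Imp B C)) (Imp (Imp A B) (Imp A C)))
| ax_and1 A B : IntAx (Imp (And A B) A)
| ax_and2 A B : IntAx (Imp (And A B) B)
| ax_andI A B : IntAx (Imp A (Imp B (And A B)))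
| ax_or1 A B : IntAx (Imp A (Or A B))
| ax_or2 A B : IntAx (Imp B (Or A B))
| ax_orE A B C : IntAx (Imp (Imp A C) (Imp (Imp B C) (Imp (Or A B) C)))
| ax_bot A : IntAx (Imp Bot A)
| ax_neg1 A : IntAx (Imp (Imp A Bot) (Neg A))
| ax_neg2 A : IntAx (Imp (Neg A) (Imp A Bot))
| ax_all A t : IntAx (Imp (All A) (inst0 t A))
| ax_ex A t : IntAx (Imp (inst0 t A) (Ex A)).

Definition ClAx (F : form) : Prop := IntAx F \/ exists A, F = Or A (Neg A).

Definition IQC (F : form) : Prop := HDer (fun G => fefree G /\ IntAx G) F.
Definition CQC (F : form) : Prop := HDer (fun G => fefree G /\ ClAx G) F.

Definition IntermediatePredLogic (QL : form -> Prop) : Prop :=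
  (forall F, QL F -> fefree F) /\
  (forall F, IQC F -> QL F) /\
  (forall F, QL F -> CQC F) /\
  (forall sg F, (forall p n, fefree (sg p n)) -> QL F -> QL (fpsub sg 0 F)) /\
  (forall A B, QL A -> QL (Imp A B) -> QL B) /\
  (forall B A, QL (Imp (flift B) A) -> QL (Imp B (All A))) /\
  (forall A B, QL (Imp A (flift B)) -> QL (Imp (Ex A) B)).

Definition Critical (F : form) : Prop :=
  exists A t, F = Imp (inst0 t A) (inst0 (Eps A) A) \/
              F = Imp (inst0 (Tau A) A) (inst0 t A).

Fixpoint pinst (s : nat -> form) (p : pform) : form :=
  match p with
  | PVar n => s n
  | PBot => Bot
  | PNeg a => Neg (pinst s a)
  | PAnd a b => And (pinst s a) (pinst s b)
  | POr a b => Or (pinst s a) (pinst s b)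
  | PImp a b => Imp (pinst s a) (pinst s b)
  end.

Inductive ETL (L : pform -> Prop) : form -> Prop :=
| etl_inst s p : (forall n, fqf (s n)) -> L p -> ETL L (pinst s p)
| etl_crit_eps A t : fqf A -> tqf t ->
    ETL L (Imp (inst0 t A) (inst0 (Eps A) A))
| etl_crit_tau A t : fqf A -> tqf t ->
    ETL L (Imp (inst0 (Tau A) A) (inst0 t A))
| etl_mp A B : ETL L A -> ETL L (Imp A B) -> ETL L B.

(* axioms: instances of formulas of QL, obtained by substituting formulas of the
   extended language for predicate symbols and terms of the extended language
   for free variables; plus all critical formulas *)
Definition QLinst (QL : form -> Prop) (F : form) : Prop :=
  exists G sg rho, QL G /\ F = fsubst rho (fpsub sg 0 G).

Definition ETplus (QL : form -> Prop) (F : form) : Prop :=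
  HDer (fun G => QLinst QL G \/ Critical G) F.

Fixpoint et (A : form) : form :=
  match A with
  | Atom p ts => Atom p ts
  | Bot => Bot
  | Neg B => Neg (et B)
  | And B C => And (et B) (et C)
  | Or B C => Or (et B) (et C)
  | Imp B C => Imp (et B) (et C)
  | All B => let b := et B in inst0 (Tau b) b
  | Ex B => let b := et B in inst0 (Eps b) b
  end.

(* A = A(x) with x the de Bruijn index 0; B occurs under the binder of x only
   as flift B, so x is not free in B. *)
Definition CD (A B : form) : form :=
  Imp (All (Or A (flift B))) (Or (All A) B).
Definition QEx (A B : form) : form :=
  Imp (Imp B (Ex A)) (Ex (Imp (flift B) A)).
Definition QAll (A B : form) : form :=
  Imp (Imp (All A) B) (Ex (Imp A (flift B))).

From Stdlib Require Import List Arith.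
Import ListNotations.

(* (1) Up to the identities (C(x) ∨ B)[t/x] = C(t) ∨ B and (C(x) → B)[t/x] = C(t) → B,
   each translation is a single critical formula: (CD)^ετ is the τ-critical formula
   of A(x) ∨ B at τx A(x), and (Q∃)^ετ, (Q∀)^ετ are the ε-critical formulas of
   B → A(x) at εx A(x) and of A(x) → B at τx A(x).
   (2) In ετ⁺(QL) a critical formula followed by a quantifier rule gives
   A(τx A) → ∀x A and ∃x A → A(εx A), while substituting C for a unary predicate in
   axioms of IQC gives ∀x C → C(t) and C(t) → ∃x C for every term t. Each of CD, Q∃
   and Q∀ then follows by intuitionistic propositional reasoning, with t := τx A or
   t := εx A. *)

Section TermFormInd.
Variables (P : term -> Prop) (Q : form -> Prop).
Hypothesis HVar : forall n, P (Var n).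
Hypothesis HFn : forall f ts, Forall P ts -> P (Fn f ts).
Hypothesis HEps : forall A, Q A -> P (Eps A).
Hypothesis HTau : forall A, Q A -> P (Tau A).
Hypothesis HAtom : forall p ts, Forall P ts -> Q (Atom p ts).
Hypothesis HBot : Q Bot.
Hypothesis HNeg : forall A, Q A -> Q (Neg A).
Hypothesis HAnd : forall A B, Q A -> Q B -> Q (And A B).
Hypothesis HOr : forall A B, Q A -> Q B -> Q (Or A B).
Hypothesis HImp : forall A B, Q A -> Q B -> Q (Imp A B).
Hypothesis HAll : forall A, Q A -> Q (All A).
Hypothesis HEx : forall A, Q A -> Q (Ex A).

Fixpoint term_mut_ind (t : term) : P t :=
  match t with
  | Var n => HVar n
  | Fn f ts => HFn f ts ((fix go (l : list term) : Forall P l :=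
      match l with
      | [] => Forall_nil P
      | u :: l' => Forall_cons u (term_mut_ind u) (go l')
      end) ts)
  | Eps A => HEps A (form_mut_ind A)
  | Tau A => HTau A (form_mut_ind A)
  end
with form_mut_ind (A : form) : Q A :=
  match A with
  | Atom p ts => HAtom p ts ((fix go (l : list term) : Forall P l :=
      match l with
      | [] => Forall_nil P
      | u :: l' => Forall_cons u (term_mut_ind u) (go l')
      end) ts)
  | Bot => HBot
  | Neg B => HNeg B (form_mut_ind B)
  | And B C => HAnd B C (form_mut_ind B) (form_mut_ind C)
  | Or B C => HOr B C (form_mut_ind B) (form_mut_ind C)
  | Imp B C => HImp B C (form_mut_ind B) (form_mut_ind C)
  | All B => HAll B (form_mut_ind B)
  | Ex B => HEx B (form_mut_ind B)
  end.

Lemma term_form_ind : (forall t, P t) /\ (forall A, Q A).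
Proof. exact (conj term_mut_ind form_mut_ind). Qed.

End TermFormInd.

Ltac map_congr :=
  rewrite ?map_map; apply map_ext_Forall;
  match goal with IH : Forall _ _ |- _ => eapply Forall_impl; [|exact IH] end;
  cbn; intros; eauto.

Ltac rewrite_IH := match goal with IH : forall _ _, _ = _ |- _ => rewrite IH end.

Lemma upren_ext xi ze : (forall n, xi n = ze n) -> forall n, upren xi n = upren ze n.
Proof. now intros H [|n]; cbn; rewrite ?H. Qed.

Lemma ren_ext :
  (forall t xi ze, (forall n, xi n = ze n) -> tren xi t = tren ze t) /\
  (forall A xi ze, (forall n, xi n = ze n) -> fren xi A = fren ze A).
Proof.
  apply term_form_ind; intros; cbn; f_equal; eauto using upren_ext; map_congr.
Qed.

Lemma fren_ext A xi ze : (forall n, xi n = ze n) -> fren xi A = fren ze A.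
Proof. exact (proj2 ren_ext A xi ze). Qed.

Lemma ren_comp :
  (forall t xi ze, tren xi (tren ze t) = tren (fun n => xi (ze n)) t) /\
  (forall A xi ze, fren xi (fren ze A) = fren (fun n => xi (ze n)) A).
Proof.
  apply term_form_ind; intros; cbn; f_equal; eauto; try map_congr;
    rewrite_IH; apply fren_ext; now intros [|n].
Qed.

Lemma tren_comp t xi ze : tren xi (tren ze t) = tren (fun n => xi (ze n)) t.
Proof. exact (proj1 ren_comp t xi ze). Qed.

Lemma up_ext s r : (forall n, s n = r n) -> forall n, up s n = up r n.
Proof. now intros H [|n]; cbn; rewrite ?H. Qed.

Lemma subst_ext :
  (forall t s r, (forall n, s n = r n) -> tsubst s t = tsubst r t) /\
  (forall A s r, (forall n, s n = r n) -> fsubst s A = fsubst r A).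
Proof.
  apply term_form_ind; intros; cbn; f_equal; eauto using up_ext; map_congr.
Qed.

Lemma tsubst_ext t s r : (forall n, s n = r n) -> tsubst s t = tsubst r t.
Proof. exact (proj1 subst_ext t s r). Qed.

Lemma fsubst_ext A s r : (forall n, s n = r n) -> fsubst s A = fsubst r A.
Proof. exact (proj2 subst_ext A s r). Qed.

Lemma subst_ren :
  (forall t s xi, tsubst s (tren xi t) = tsubst (fun n => s (xi n)) t) /\
  (forall A s xi, fsubst s (fren xi A) = fsubst (fun n => s (xi n)) A).
Proof.
  apply term_form_ind; intros; cbn; f_equal; eauto; try map_congr;
    rewrite_IH; apply fsubst_ext; now intros [|n].
Qed.

Lemma tsubst_tren t s xi : tsubst s (tren xi t) = tsubst (fun n => s (xi n)) t.
Proof. exact (proj1 subst_ren t s xi). Qed.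

Lemma fsubst_fren A s xi : fsubst s (fren xi A) = fsubst (fun n => s (xi n)) A.
Proof. exact (proj2 subst_ren A s xi). Qed.

Lemma up_tren xi s n : tren (upren xi) (up s n) = up (fun m => tren xi (s m)) n.
Proof. destruct n; cbn; [reflexivity|]. unfold tlift. now rewrite !tren_comp. Qed.

Lemma ren_subst :
  (forall t s xi, tren xi (tsubst s t) = tsubst (fun n => tren xi (s n)) t) /\
  (forall A s xi, fren xi (fsubst s A) = fsubst (fun n => tren xi (s n)) A).
Proof.
  apply term_form_ind; intros; cbn; f_equal; eauto; try map_congr;
    rewrite_IH; apply fsubst_ext, up_tren.
Qed.

Lemma tren_tsubst t s xi : tren xi (tsubst s t) = tsubst (fun n => tren xi (s n)) t.
Proof. exact (proj1 ren_subst t s xi). Qed.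

Lemma fren_fsubst A s xi : fren xi (fsubst s A) = fsubst (fun n => tren xi (s n)) A.
Proof. exact (proj2 ren_subst A s xi). Qed.

Lemma up_tsubst s r n : tsubst (up r) (up s n) = up (fun m => tsubst r (s m)) n.
Proof.
  destruct n; cbn; [reflexivity|]. unfold tlift.
  rewrite tsubst_tren, tren_tsubst. now apply tsubst_ext.
Qed.

Lemma subst_comp :
  (forall t s r, tsubst r (tsubst s t) = tsubst (fun n => tsubst r (s n)) t) /\
  (forall A s r, fsubst r (fsubst s A) = fsubst (fun n => tsubst r (s n)) A).
Proof.
  apply term_form_ind; intros; cbn; f_equal; eauto; try map_congr;
    rewrite_IH; apply fsubst_ext, up_tsubst.
Qed.

Lemma fsubst_comp A s r : fsubst r (fsubst s A) = fsubst (fun n => tsubst r (s n)) A.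
Proof. exact (proj2 subst_comp A s r). Qed.

Lemma up_id s : (forall n, s n = Var n) -> forall n, up s n = Var n.
Proof. now intros H [|n]; cbn; rewrite ?H. Qed.

Lemma subst_id :
  (forall t s, (forall n, s n = Var n) -> tsubst s t = t) /\
  (forall A s, (forall n, s n = Var n) -> fsubst s A = A).
Proof.
  apply term_form_ind; intros; cbn; f_equal; eauto using up_id;
    rewrite <- map_id; map_congr.
Qed.

Lemma fsubst_id A s : (forall n, s n = Var n) -> fsubst s A = A.
Proof. exact (proj2 subst_id A s). Qed.

Lemma inst0_flift t B : inst0 t (flift B) = B.
Proof. unfold inst0, flift. rewrite fsubst_fren. now apply fsubst_id. Qed.

Lemma inst0_Or t A B : inst0 t (Or A B) = Or (inst0 t A) (inst0 t B).
Proof. reflexivity. Qed.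

Lemma inst0_Imp t A B : inst0 t (Imp A B) = Imp (inst0 t A) (inst0 t B).
Proof. reflexivity. Qed.

Lemma fren_inst0 xi t A : fren xi (inst0 t A) = inst0 (tren xi t) (fren (upren xi) A).
Proof.
  unfold inst0. rewrite fren_fsubst, fsubst_fren. apply fsubst_ext. now intros [|n].
Qed.

Lemma inst0_var0_lift A : inst0 (Var 0) (fren (upren S) A) = A.
Proof. unfold inst0. rewrite fsubst_fren. apply fsubst_id. now intros [|n]. Qed.

Lemma et_fren A xi : et (fren xi A) = fren xi (et A).
Proof.
  revert xi; induction A; intros; cbn; rewrite ?IHA, ?IHA1, ?IHA2, ?fren_inst0; reflexivity.
Qed.

Lemma et_flift A : et (flift A) = flift (et A).
Proof. apply et_fren. Qed.

Lemma Forall_list_fix (R : term -> Prop) ts :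
  (fix go (l : list term) : Prop := match l with [] => True | u :: l' => R u /\ go l' end) ts
  <-> Forall R ts.
Proof. induction ts; cbn; rewrite ?Forall_cons_iff; intuition. Qed.

Lemma tqf_Fn f ts : tqf (Fn f ts) <-> Forall tqf ts.
Proof. apply Forall_list_fix. Qed.

Lemma fqf_Atom p ts : fqf (Atom p ts) <-> Forall tqf ts.
Proof. apply Forall_list_fix. Qed.

Lemma tefree_Fn f ts : tefree (Fn f ts) <-> Forall tefree ts.
Proof. apply Forall_list_fix. Qed.

Lemma fefree_Atom p ts : fefree (Atom p ts) <-> Forall tefree ts.
Proof. apply Forall_list_fix. Qed.

Ltac qf_list :=
  match goal with
  | |- tqf (Fn _ _) => apply tqf_Fn
  | |- fqf (Atom _ _) => apply fqf_Atom
  end;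
  match goal with
  | H : tqf (Fn _ _) |- _ => apply tqf_Fn in H
  | H : fqf (Atom _ _) |- _ => apply fqf_Atom in H
  end;
  apply Forall_map;
  match goal with IH : Forall _ ?ts, H : Forall tqf ?ts |- _ =>
    eapply Forall_impl; [|apply Forall_and; [exact IH | exact H]] end;
  cbn; intros ? [? ?]; eauto.

Lemma qf_ren :
  (forall t xi, tqf t -> tqf (tren xi t)) /\ (forall A xi, fqf A -> fqf (fren xi A)).
Proof.
  apply term_form_ind; intros; cbn [tren fren];
    solve [qf_list | cbn in *; intuition eauto].
Qed.

Lemma fqf_flift A : fqf A -> fqf (flift A).
Proof. apply qf_ren. Qed.

Lemma up_qf s : (forall n, tqf (s n)) -> forall n, tqf (up s n).
Proof. intros H [|n]; cbn; [exact I | apply qf_ren, H]. Qed.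

Lemma qf_subst :
  (forall t s, (forall n, tqf (s n)) -> tqf t -> tqf (tsubst s t)) /\
  (forall A s, (forall n, tqf (s n)) -> fqf A -> fqf (fsubst s A)).
Proof.
  apply term_form_ind; intros; cbn [tsubst fsubst];
    solve [qf_list | cbn in *; intuition eauto using up_qf].
Qed.

Lemma fqf_inst0 t A : tqf t -> fqf A -> fqf (inst0 t A).
Proof. intros Ht HA. apply qf_subst; [intros [|n]; cbn; auto | exact HA]. Qed.

Lemma tefree_tqf t : tefree t -> tqf t.
Proof.
  revert t. apply (term_mut_ind (fun t => tefree t -> tqf t) (fun _ => True)); try easy.
  intros f ts IH Hts. apply tqf_Fn. apply tefree_Fn in Hts.
  eapply Forall_impl; [|apply Forall_and; [exact IH | exact Hts]].
  cbn; intros ? [? ?]; auto.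
Qed.

Lemma fqf_et A : fefree A -> fqf (et A).
Proof.
  induction A; cbn [et fefree]; intros; try (cbn; tauto).
  - apply fqf_Atom, (Forall_impl _ tefree_tqf), (fefree_Atom n), H.
  - apply fqf_inst0; cbn; auto.
  - apply fqf_inst0; cbn; auto.
Qed.

Section CriticalTranslations.
Variable L : pform -> Prop.
Variables A B : form.
Hypotheses (HA : fefree A) (HB : fefree B).

Let fqf_a : fqf (et A) := fqf_et A HA.
Let fqf_b : fqf (flift (et B)) := fqf_flift _ (fqf_et B HB).

Lemma ETL_et_CD : ETL L (et (CD A B)).
Proof.
  assert (crit := etl_crit_tau L (Or (et A) (flift (et B))) (Tau (et A))).
  rewrite (inst0_Or (Tau (et A))), inst0_flift in crit.
  unfold CD; cbn [et]; rewrite et_flift.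
  apply crit; cbn; auto.
Qed.

Lemma ETL_et_QEx : ETL L (et (QEx A B)).
Proof.
  assert (crit := etl_crit_eps L (Imp (flift (et B)) (et A)) (Eps (et A))).
  rewrite (inst0_Imp (Eps (et A))), inst0_flift in crit.
  unfold QEx; cbn [et]; rewrite et_flift.
  apply crit; cbn; auto.
Qed.

Lemma ETL_et_QAll : ETL L (et (QAll A B)).
Proof.
  assert (crit := etl_crit_eps L (Imp (et A) (flift (et B))) (Tau (et A))).
  rewrite (inst0_Imp (Tau (et A))), inst0_flift in crit.
  unfold QAll; cbn [et]; rewrite et_flift.
  apply crit; cbn; auto.
Qed.

End CriticalTranslations.

Section HilbertPropositional.
Variable Ax : form -> Prop.
Hypothesis HIPC : forall p s, IPC p -> HDer Ax (pinst s p).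

Let inst3 (X Y Z : form) (n : nat) : form := nth n [X; Y; Z] Bot.

Let HK X Y : HDer Ax (Imp X (Imp Y X)).
Proof. exact (HIPC _ (inst3 X Y Y) (ipc_k (PVar 0) (PVar 1))). Qed.

Let HS X Y Z : HDer Ax (Imp (Imp X (Imp Y Z)) (Imp (Imp X Y) (Imp X Z))).
Proof. exact (HIPC _ (inst3 X Y Z) (ipc_s (PVar 0) (PVar 1) (PVar 2))). Qed.

Lemma HDer_imp_const X Y : HDer Ax Y -> HDer Ax (Imp X Y).
Proof. intro HY. exact (hd_mp _ _ _ HY (HK Y X)). Qed.

Lemma HDer_imp_post X Y Z : HDer Ax (Imp X Y) -> HDer Ax (Imp (Imp Z X) (Imp Z Y)).
Proof. intro HXY. exact (hd_mp _ _ _ (HDer_imp_const Z _ HXY) (HS Z X Y)). Qed.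

Lemma HDer_imp_trans X Y Z :
  HDer Ax (Imp X Y) -> HDer Ax (Imp Y Z) -> HDer Ax (Imp X Z).
Proof. intros HXY HYZ. exact (hd_mp _ _ _ HXY (HDer_imp_post _ _ X HYZ)). Qed.

Lemma HDer_imp_pre X Y Z : HDer Ax (Imp X Y) -> HDer Ax (Imp (Imp Y Z) (Imp X Z)).
Proof.
  intro HXY.
  assert (comp : HDer Ax (Imp (Imp Y Z) (Imp (Imp X Y) (Imp X Z))))
    by exact (HDer_imp_trans _ _ _ (HK (Imp Y Z) X) (HS X Y Z)).
  exact (hd_mp _ _ _ (HDer_imp_const (Imp Y Z) _ HXY) (hd_mp _ _ _ comp (HS _ _ _))).
Qed.

Lemma HDer_or_mono_l X Y Z : HDer Ax (Imp X Y) -> HDer Ax (Imp (Or X Z) (Or Y Z)).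
Proof.
  intro HXY.
  assert (inl : HDer Ax (Imp X (Or Y Z)))
    by exact (HDer_imp_trans _ _ _ HXY (HIPC _ (inst3 Y Z Z) (ipc_or1 (PVar 0) (PVar 1)))).
  assert (inr : HDer Ax (Imp Z (Or Y Z)))
    by exact (HIPC _ (inst3 Y Z Z) (ipc_or2 (PVar 0) (PVar 1))).
  exact (hd_mp _ _ _ inr (hd_mp _ _ _ inl
           (HIPC _ (inst3 X Z (Or Y Z)) (ipc_orE (PVar 0) (PVar 1) (PVar 2))))).
Qed.

End HilbertPropositional.

Definition prop_atom (n : nat) : form := Atom n [].

Lemma fefree_pinst_prop_atom p : fefree (pinst prop_atom p).
Proof. induction p; cbn; auto. Qed.

Lemma IQC_pinst_prop_atom p : IPC p -> IQC (pinst prop_atom p).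
Proof.
  induction 1; try (apply hd_ax; split; [apply (fefree_pinst_prop_atom (PImp _ _)) | constructor]).
  exact (hd_mp _ _ _ IHIPC1 IHIPC2).
Qed.

Lemma fsubst_fpsub_pinst_prop_atom s p :
  fsubst Var (fpsub (fun n _ => s n) 0 (pinst prop_atom p)) = pinst s p.
Proof.
  induction p; cbn; try congruence.
  rewrite !fsubst_id; auto. intro m. unfold argsub; cbn. now rewrite Nat.sub_0_r, Nat.add_0_r.
Qed.

(* The parameters of [A] are shifted up by one, so that variable 0 stays free for the
   term later substituted by [scons0 t]; [argsub] then shifts them back. *)
Definition unary_pred_sub (A : form) : nat -> nat -> form := fun _ _ => fren (upren S) A.

Lemma fsubst_unary_pred_sub_free t A :
  fsubst (scons0 t) (fpsub (unary_pred_sub A) 0 (Atom 0 [Var 0])) = inst0 t A.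
Proof.
  cbn. unfold unary_pred_sub. rewrite fsubst_comp, fsubst_fren. apply fsubst_ext.
  intros [|n]; unfold argsub; cbn; now rewrite ?Nat.add_0_r.
Qed.

Lemma fsubst_unary_pred_sub_bound t A :
  fsubst (up (scons0 t)) (fpsub (unary_pred_sub A) 1 (Atom 0 [Var 0])) = A.
Proof.
  cbn. unfold unary_pred_sub. rewrite fsubst_comp, fsubst_fren. apply fsubst_id.
  intros [|n]; unfold argsub; cbn; now rewrite ?Nat.add_1_r.
Qed.

Section EpsilonTauPlus.
Variable QL : form -> Prop.
Hypothesis HQL : IntermediatePredLogic QL.

Lemma ETplus_QL_instance G sg rho : QL G -> ETplus QL (fsubst rho (fpsub sg 0 G)).
Proof. intro HG. apply hd_ax. left. now exists G, sg, rho. Qed.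

Lemma QL_IntAx G : fefree G -> IntAx G -> QL G.
Proof. intros HG HAx. apply HQL, hd_ax. auto. Qed.

Lemma ETplus_IPC p s : IPC p -> ETplus QL (pinst s p).
Proof.
  intro Hp. rewrite <- fsubst_fpsub_pinst_prop_atom.
  apply ETplus_QL_instance, HQL, IQC_pinst_prop_atom, Hp.
Qed.

Lemma ETplus_all_elim A t : ETplus QL (Imp (All A) (inst0 t A)).
Proof.
  rewrite <- (fsubst_unary_pred_sub_free t A).
  rewrite <- (fsubst_unary_pred_sub_bound t A) at 1.
  apply (ETplus_QL_instance (Imp (All (Atom 0 [Var 0])) (Atom 0 [Var 0]))).
  apply QL_IntAx; [cbn; auto | exact (ax_all (Atom 0 [Var 0]) (Var 0))].
Qed.

Lemma ETplus_ex_intro A t : ETplus QL (Imp (inst0 t A) (Ex A)).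
Proof.
  rewrite <- (fsubst_unary_pred_sub_free t A).
  rewrite <- (fsubst_unary_pred_sub_bound t A) at 2.
  apply (ETplus_QL_instance (Imp (Atom 0 [Var 0]) (Ex (Atom 0 [Var 0])))).
  apply QL_IntAx; [cbn; auto | exact (ax_ex (Atom 0 [Var 0]) (Var 0))].
Qed.

Lemma ETplus_tau_all A : ETplus QL (Imp (inst0 (Tau A) A) (All A)).
Proof.
  assert (crit : Critical (Imp (inst0 (Tau (fren (upren S) A)) (fren (upren S) A))
                              (inst0 (Var 0) (fren (upren S) A))))
    by (eexists _, _; now right).
  rewrite inst0_var0_lift in crit.
  apply hd_all, hd_ax. right. unfold flift. now rewrite fren_inst0.
Qed.

Lemma ETplus_ex_eps A : ETplus QL (Imp (Ex A) (inst0 (Eps A) A)).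
Proof.
  assert (crit : Critical (Imp (inst0 (Var 0) (fren (upren S) A))
                              (inst0 (Eps (fren (upren S) A)) (fren (upren S) A))))
    by (eexists _, _; now left).
  rewrite inst0_var0_lift in crit.
  apply hd_ex, hd_ax. right. unfold flift. now rewrite fren_inst0.
Qed.

Lemma ETplus_CD A B : ETplus QL (CD A B).
Proof.
  assert (inst := ETplus_all_elim (Or A (flift B)) (Tau A)).
  rewrite inst0_Or, inst0_flift in inst.
  exact (HDer_imp_trans _ ETplus_IPC _ _ _ inst
           (HDer_or_mono_l _ ETplus_IPC _ _ B (ETplus_tau_all A))).
Qed.

Lemma ETplus_QEx A B : ETplus QL (QEx A B).
Proof.
  assert (intro := ETplus_ex_intro (Imp (flift B) A) (Eps A)).
  rewrite inst0_Imp, inst0_flift in intro.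
  exact (HDer_imp_trans _ ETplus_IPC _ _ _
           (HDer_imp_post _ ETplus_IPC _ _ B (ETplus_ex_eps A)) intro).
Qed.

Lemma ETplus_QAll A B : ETplus QL (QAll A B).
Proof.
  assert (intro := ETplus_ex_intro (Imp A (flift B)) (Tau A)).
  rewrite inst0_Imp, inst0_flift in intro.
  exact (HDer_imp_trans _ ETplus_IPC _ _ _
           (HDer_imp_pre _ ETplus_IPC _ _ B (ETplus_tau_all A)) intro).
Qed.

End EpsilonTauPlus.

Theorem mainTheorem1 (L : pform -> Prop) (QL : form -> Prop) :
  IntermediatePropLogic L -> IntermediatePredLogic QL ->
  (forall A B : form, fefree A -> fefree B ->
     ETL L (et (CD A B)) /\ ETL L (et (QEx A B)) /\ ETL L (et (QAll A B))) /\
  (forall A B : form,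
     ETplus QL (CD A B) /\ ETplus QL (QEx A B) /\ ETplus QL (QAll A B)).
Proof.
  intros _ HQL. split.
  - intros A B HA HB.
    split; [|split]; [apply ETL_et_CD | apply ETL_et_QEx | apply ETL_et_QAll]; assumption.
  - intros A B.
    split; [|split]; [apply ETplus_CD | apply ETplus_QEx | apply ETplus_QAll]; exact HQL.
Qed.
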